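(* Let $G \leq \mathrm{Aut}(K_{n,n})$ be a subgroup isomorphic to $A_4$. Suppose there is an embedding $\Gamma$ of $K_{n,n}$ in $S^3$ such that $G$ is induced on $\Gamma$ by an isomorphic subgroup $\widehat{G} \leq \mathrm{SO}(4)$. Let $n_2^v$ and $n_2^w$ denote the number of vertices of $V$, respectively of $W$, fixed by an element of order 2 of $G$ (these numbers are the same for all elements of order 2 of $G$). If $n_2^w = 0$, then $4$ divides $n_2^v$.
   Context: $K_{n,n}$ is the complete bipartite graph with vertex sets $V$, $W$ of $n$ vertices each; every vertex of $V$ is adjacent to every vertex of $W$, and there are no other edges. $S^3$ is the unit sphere in $\mathbb{R}^4$, on which $\mathrm{SO}(4)$ acts by isometries. ''$G$ is induced on $\Gamma$ by an isomorphic subgroup $\widehat{G} \leq \mathrm{SO}(4)$'' means every element of $\widehat{G}$ leaves $\Gamma$ setwise invariant, and restricting to $\Gamma$ gives an isomorphism from $\widehat{G}$ onto $G$. *)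

From HB Require Import structures.
From mathcomp Require Import all_boot all_order all_algebra all_fingroup all_solvable.
From mathcomp Require Import all_classical all_reals topology normedtype.
Set Implicit Arguments. Unset Strict Implicit. Unset Printing Implicit Defensive.
Import Order.TTheory GRing.Theory Num.Theory numFieldNormedType.Exports.
Local Open Scope ring_scope.
Local Open Scope classical_set_scope.

(* Vertex set of K_{n,n}: V = inl _, W = inr _ *)
Definition Knn (n : nat) : finType := ('I_n + 'I_n)%type.

Definition knn_adj n : rel (Knn n) := fun u v =>
  match u, v with
  | inl _, inr _ | inr _, inl _ => true
  | _, _ => false
  end.

Definition is_aut n (s : {perm Knn n}) : Prop :=
  forall u v : Knn n, knn_adj (s u) (s v) = knn_adj u v.

Definition S3 (R : realType) : set 'rV[R]_4 :=
  [set x | \sum_(i < 4) x ord0 i ^+ 2 = 1].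

(* SO(4), acting on row vectors by x |-> x *m A *)
Definition SO4 (R : realType) (A : 'M[R]_4) : Prop :=
  A *m A^T = 1%:M /\ \det A = 1.

Definition I01 (R : realType) : set R := [set t | 0 <= t <= 1].
Definition I01o (R : realType) : set R := [set t | 0 < t < 1].

(* An embedding of K_{n,n} in S^3: vertex points [pts], and for each edge
   (inl i, inr j) an arc [arc i j] parametrized by [0,1]. *)
Definition is_embedding (R : realType) n (pts : Knn n -> 'rV[R]_4)
    (arc : 'I_n -> 'I_n -> R -> 'rV[R]_4) : Prop :=
  [/\ injective pts,
      (forall v, S3 (pts v)),
      (forall i j, {within @I01 R, continuous arc i j}) &
   [/\ 
      (forall i j s t, I01 s -> I01 t -> arc i j s = arc i j t -> s = t),
      (forall i j t, I01 t -> S3 (arc i j t)),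
      (forall i j, arc i j 0 = pts (inl i) /\ arc i j 1 = pts (inr j)),
      (forall i j t v, I01o t -> arc i j t <> pts v) &
      (forall i j i' j' s t, I01o s -> I01o t -> (i, j) <> (i', j') ->
         arc i j s <> arc i' j' t)]].

Definition image_of (R : realType) n (pts : Knn n -> 'rV[R]_4)
    (arc : 'I_n -> 'I_n -> R -> 'rV[R]_4) : set 'rV[R]_4 :=
  range pts `|` [set x | exists i j t, I01 t /\ x = arc i j t].

(* G is induced on Gamma by an isomorphic subgroup Ghat <= SO(4):
   psi : G -> SO(4) is the inverse of the restriction isomorphism Ghat -> G.
   Permutation product g * h applies g first, matching x *m (A *m B). *)
Definition induced_by_SO4 (R : realType) n (G : {group {perm Knn n}})
    (pts : Knn n -> 'rV[R]_4) (arc : 'I_n -> 'I_n -> R -> 'rV[R]_4) : Prop :=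
  exists psi : {perm Knn n} -> 'M[R]_4,
    [/\ {in G &, forall g h, psi (g * h)%g = psi g *m psi h},
        {in G &, injective psi},
        {in G, forall g, SO4 (psi g)},
        {in G, forall g, (fun x => x *m psi g) @` image_of pts arc
                          = image_of pts arc} &
        {in G, forall g v, pts v *m psi g = pts (g v)}].

Definition fixV n (g : {perm Knn n}) : nat := #|[set i : 'I_n | g (inl i) == inl i]|.
Definition fixW n (g : {perm Knn n}) : nat := #|[set j : 'I_n | g (inr j) == inr j]|.

From HB Require Import structures.
From mathcomp Require Import all_classical all_reals topology normedtype.
From mathcomp Require Import all_boot all_order all_algebra all_fingroup all_solvable.

(* An automorphism of K_{n,n} either preserves or swaps the two sides, and which
   one it does is multiplicative.  In A_4 an involution g lies in a Klein
   four-group P whose three involutions are the conjugates of g under an element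
   c of order 3.  Then c preserves the sides, hence so do the three involutions,
   since each is the product of the other two and all three behave alike.
   Conjugate elements fix equally many vertices of each side, so Burnside's
   lemma for P acting on V and on W gives 4 | n + 3 n_2^v and 4 | n + 3 n_2^w;
   with n_2^w = 0 this leaves 4 | 3 n_2^v. *)

Set Implicit Arguments. Unset Strict Implicit. Unset Printing Implicit Defensive.

Section KleinFrame.
Local Open Scope group_scope.

Lemma classJ (gT : finGroupType) (x y : gT) (A : {set gT}) :
  (x ^: A) :^ y = (x ^ y) ^: (A :^ y).
Proof. by rewrite -class_rcoset -class_lcoset conjsgE lcosetKV. Qed.

Definition klein_frame (gT : finGroupType) (G P : {set gT}) (x c : gT) :=
  [/\ c \in G, c ^+ 3 = 1, P \subset G, #|P| = 4 & P^# = x ^: <[c]> ].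

Variable T : finType.
Implicit Types (S : {set T}) (a t : {perm T}).

Lemma card_afixJ S a t : t \in 'N(S | 'P) ->
  #|'Fix_(S | 'P)[a ^ t]| = #|'Fix_(S | 'P)[a]|.
Proof.
move=> /astabsP nSt; have {}nSt x : (t x \in S) = (x \in S) := nSt x.
rewrite -[RHS](card_preimset _ (@perm_inj _ t^-1)).
apply: eq_card => w; have [u ->] : exists u, w = t u by exists (t^-1 w); rewrite permKV.
rewrite !inE !sub1set !inE /= !apermE permK nSt conjgE !permM permK.
by rewrite (inj_eq (@perm_inj _ t)).
Qed.

Lemma klein_frame_fix_count (G P : {group {perm T}}) S x c :
  klein_frame G P x c -> P \subset 'N(S | 'P) -> c \in 'N(S | 'P) ->
  (4 %| #|S| + 3 * #|'Fix_(S | 'P)[x]|)%N.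
Proof.
move=> [_ _ _ cardP clsP] nSP nSc.
have card3 : #|P^#| = 3 by move: (cardsD1 1 P); rewrite group1 cardP add1n => -[].
have fix1 : #|'Fix_(S | 'P)[1]| = #|S|.
  by apply: eq_card => v; rewrite !inE sub1set !inE /= apermE perm1 eqxx andbT.
have ncS : <[c]> \subset 'N(S | 'P) by rewrite cycle_subG.
have sum_conj : \sum_(a in P^#) #|'Fix_(S | 'P)[a]| = (3 * #|'Fix_(S | 'P)[x]|)%N.
  rewrite -card3 -sum_nat_const; apply: eq_bigr => a.
  by rewrite clsP => /imsetP[u /(subsetP ncS) nSu ->]; rewrite card_afixJ.
have := Frobenius_Cauchy nSP; rewrite (big_setD1 1) //= fix1 sum_conj cardP => ->.
exact: dvdn_mull.
Qed.
End KleinFrame.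

Section Alt4.
Local Open Scope group_scope.

Definition o0 : 'I_4 := @Ordinal 4 0 isT.
Definition o1 : 'I_4 := @Ordinal 4 1 isT.
Definition o2 : 'I_4 := @Ordinal 4 2 isT.
Definition o3 : 'I_4 := @Ordinal 4 3 isT.

Lemma ord4P (i : 'I_4) : [\/ i = o0, i = o1, i = o2 | i = o3].
Proof.
by case: i => -[|[|[|[|//]]]] ?; [constructor 1|constructor 2|constructor 3|constructor 4];
  apply: val_inj.
Qed.

Lemma perm4P (p q : {perm 'I_4}) :
  p o0 = q o0 -> p o1 = q o1 -> p o2 = q o2 -> p o3 = q o3 -> p = q.
Proof. by move=> *; apply/permP => i; case: (ord4P i) => ->. Qed.

Ltac perm4_eval := apply: perm4P; by rewrite ?perm1 !permM /tperm !permE.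

Definition D1 : {perm 'I_4} := tperm o0 o1 * tperm o2 o3.
Definition D2 : {perm 'I_4} := tperm o0 o2 * tperm o1 o3.
Definition D3 : {perm 'I_4} := tperm o0 o3 * tperm o1 o2.
Definition C3 : {perm 'I_4} := tperm o1 o2 * tperm o1 o3.

Definition klein : {set {perm 'I_4}} :=
  [set u | [|| u == 1, u == D1, u == D2 | u == D3]].

Lemma group_set_klein : group_set klein.
Proof.
apply/group_setP; split=> [|u v]; first by rewrite inE eqxx.
rewrite !inE => /or4P[]/eqP-> /or4P[]/eqP->; apply/or4P;
  solve [ constructor 1; apply/eqP; perm4_eval | constructor 2; apply/eqP; perm4_eval
        | constructor 3; apply/eqP; perm4_eval | constructor 4; apply/eqP; perm4_eval ].
Qed.

Canonical Klein := Group group_set_klein.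

Lemma card_klein : #|klein| = 4.
Proof.
have -> : klein = [set u in [:: 1; D1; D2; D3]] by apply/setP => u; rewrite !inE.
rewrite cardsE; apply/card_uniqP/(map_uniq (f := fun p : {perm _} => p o0)).
by rewrite /= perm1 !permM /tperm !permE.
Qed.

Lemma C3_order3 : C3 ^+ 3 = 1.
Proof. rewrite !expgS expg0 mulg1; perm4_eval. Qed.

Lemma C3_Alt : C3 \in 'Alt_('I_4).
Proof. by rewrite Alt_even odd_permM !odd_tperm. Qed.

Lemma klein_Alt : klein \subset 'Alt_('I_4).
Proof.
apply/subsetP => u; rewrite inE => /or4P[]/eqP->;
  by rewrite ?group1 // Alt_even odd_permM !odd_tperm.
Qed.

Lemma card_Alt4 : #|'Alt_('I_4)| = 12.
Proof.
have := @card_Alt 'I_4; rewrite card_ord => /(_ isT) /eqP.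
by rewrite -[4`!]/(2 * 12)%N eqn_pmul2l // => /eqP.
Qed.

Lemma klein_Sylow : 2.-Sylow('Alt_('I_4)) Klein.
Proof. by rewrite pHallE klein_Alt card_klein card_Alt4 p_part. Qed.

Lemma klein_class : klein^# \subset D1 ^: <[C3]>.
Proof.
have D12 : D1 ^ C3 = D2 by rewrite conjgE !invMg !tpermV; perm4_eval.
have D13 : D1 ^ (C3 ^+ 2) = D3 by rewrite conjgE expgS expg1 !invMg !tpermV; perm4_eval.
apply/subsetP => u; rewrite !inE => /andP[u1 /or4P[]/eqP Eu]; rewrite Eu in u1 *.
- by rewrite eqxx in u1.
- exact: class_refl.
- by rewrite -D12 memJ_class ?cycle_id.
- by rewrite -D13 memJ_class ?mem_cycle.
Qed.



Lemma Alt4_involution_frame x : x \in 'Alt_('I_4) -> #[x] = 2 ->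
  exists c, exists P : {group {perm 'I_4}}, klein_frame 'Alt_('I_4) P x c.
Proof.
move=> Ax ox.
have p_x : 2.-group <[x]> by rewrite /pgroup -orderE ox.
have sxA : <[x]> \subset 'Alt_('I_4) by rewrite cycle_subG.
have [s As sxK] := Sylow_subJ klein_Sylow sxA p_x.
have Px : x \in (Klein :^ s)^# by rewrite !inE -order_eq1 ox -cycle_subG sxK.
exists (C3 ^ s), (Klein :^ s)%G; split.
- by rewrite groupJ ?C3_Alt.
- by rewrite -conjXg C3_order3 conj1g.
- by rewrite conj_subG ?klein_Alt.
- by rewrite cardJg card_klein.
have sub_cls : (Klein :^ s)^# \subset (D1 ^ s) ^: <[C3 ^ s]>.
  by rewrite -conjD1g cycleJ -classJ conjSg klein_class.
have -> : x ^: <[C3 ^ s]> = (D1 ^ s) ^: <[C3 ^ s]>.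
  exact/class_eqP/(subsetP sub_cls).
apply/eqP; rewrite eqEcard sub_cls /=.
have := cardsD1 1 (Klein :^ s); rewrite group1 cardJg card_klein add1n => -[<-].
rewrite (leq_trans (leq_imset_card _ _)) //.
by rewrite -orderE dvdn_leq // order_dvdn -conjXg C3_order3 conj1g.
Qed.

End Alt4.

Section Transport.
Local Open Scope group_scope.

Lemma isog_Alt4_involution_frame (gT : finGroupType) (G : {group gT}) g :
  G \isog 'Alt_('I_4) -> g \in G -> #[g] = 2 ->
  exists t, exists P : {group gT}, klein_frame G P g t.
Proof.
case/isogP => f injf imf Gg og.
have Afg : f g \in 'Alt_('I_4) by rewrite -imf mem_morphim.
have [c [P' [Ac c3 sP'A cardP' clsP']]] :=
  Alt4_involution_frame Afg (etrans (order_injm injf Gg) og).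
have /morphimP[t _ Gt def_c] : c \in f @* G by rewrite imf.
subst c.
have sP'f : P' \subset f @* G by rewrite imf.
have sPG : f @*^-1 P' \subset G := subsetIl _ _.
exists t, (f @*^-1 P')%G; split => //.
- by apply: (injmP injf); rewrite ?groupX ?group1 // morphX // morph1.
- by rewrite -(card_injm injf sPG) morphpreK.
have sCG : <[t]> \subset G by rewrite cycle_subG.
apply/eqP; rewrite -(injm_eq injf) ?injmD1 ?morphpreK ?morphim_class ?morphim_cycle //.
- by rewrite clsP'.
- exact: subset_trans (subsetDl _ _) sPG.
- by rewrite class_subG.
Qed.
End Transport.


Section Sides.
Local Open Scope group_scope.
Variable n : nat.
Implicit Types (s t : {perm Knn n}) (b c : bool).

Definition in_V (v : Knn n) : bool := if v is inl _ then true else false.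

Definition side b : {set Knn n} := [set v | in_V v == b].

Definition flips s b := forall v, in_V (s v) = b (+) in_V v.

Lemma aut_flips s : is_aut s -> exists b, flips s b.
Proof.
move=> aut_s; have adjE (u v : Knn n) : knn_adj u v = (in_V u != in_V v).
  by case: u; case: v.
case: (pickP (fun v => in_V (s v) == in_V v)) => [v0 /eqP s_v0 | s_swap].
  exists false => u; have := aut_s u v0; rewrite !adjE s_v0.
  by case: (in_V (s u)); case: (in_V u); case: (in_V v0).
by exists true => u; have := s_swap u; case: (in_V (s u)); case: (in_V u).
Qed.

Lemma flips_eq s b c (v : Knn n) : flips s b -> flips s c -> b = c.
Proof. by move=> /(_ v) fb /(_ v); rewrite fb; case: b {fb}; case: c; case: (in_V v). Qed.

Lemma flips1 : flips 1 false.
Proof. by move=> v; rewrite perm1. Qed.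

Lemma flipsM s t b c : flips s b -> flips t c -> flips (s * t) (b (+) c).
Proof. by move=> fs ft v; rewrite permM ft fs addbCA addbA. Qed.

Lemma flipsV s b : flips s b -> flips s^-1 b.
Proof. by move=> fs v; rewrite -{2}(permKV s v) fs addbA addbb. Qed.

Lemma flipsJ s t b c : flips s b -> flips t c -> flips (s ^ t) b.
Proof.
move=> fs ft v; rewrite conjgE (flipsM (flipsV ft) (flipsM fs ft)).
by rewrite addbCA addbb addbF.
Qed.

Lemma flips_order3 s : is_aut s -> s ^+ 3 = 1 -> flips s false.
Proof.
move=> /aut_flips[b fb] s3 v; have := congr1 (fun p : {perm _} => in_V (p v)) s3.
by rewrite /= perm1 !expgS expg0 mulg1 !permM !fb; case: b {fb}; case: (in_V v).
Qed.

Lemma flips_astabs s b : flips s false -> s \in 'N(side b | 'P).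
Proof. by move=> fs; apply/astabsP => v; rewrite !inE /= apermE fs. Qed.

Lemma card_side b : #|side b| = n.
Proof.
case: b; rewrite -[RHS](card_ord n) -cardsT.
  rewrite -[RHS](card_imset _ (@inl_inj 'I_n 'I_n)); apply: eq_card => -[i|j].
    by rewrite inE (mem_imset _ _ inl_inj) in_setT.
  by rewrite !inE; apply/esym/negbTE/negP => /imsetP[].
rewrite -[RHS](card_imset _ (@inr_inj 'I_n 'I_n)); apply: eq_card => -[i|j].
  by rewrite !inE; apply/esym/negbTE/negP => /imsetP[].
by rewrite inE (mem_imset _ _ inr_inj) in_setT.
Qed.

Lemma fixV_afix s : fixV s = #|'Fix_(side true | 'P)[s]|.
Proof.
rewrite /fixV -(card_imset _ (@inl_inj 'I_n 'I_n)); apply: eq_card => -[i|j].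
  rewrite (mem_imset _ _ inl_inj) !inE sub1set !inE /= apermE.
  by apply/idP/idP => [/set_mem|/mem_set].
by rewrite !inE; apply/negbTE/negP => /imsetP[].
Qed.

Lemma fixW_afix s : fixW s = #|'Fix_(side false | 'P)[s]|.
Proof.
rewrite /fixW -(card_imset _ (@inr_inj 'I_n 'I_n)); apply: eq_card => -[i|j].
  by rewrite !inE; apply/negbTE/negP => /imsetP[].
rewrite (mem_imset _ _ inr_inj) !inE sub1set !inE /= apermE.
by apply/idP/idP => [/set_mem|/mem_set].
Qed.

End Sides.

Section KleinFrameSides.
Local Open Scope group_scope.
Variables (n : nat) (G : {group {perm Knn n}}).
Hypothesis autG : forall h, h \in G -> is_aut h.

Lemma klein_frame_flips (P : {group {perm Knn n}}) x c :
  klein_frame G P x c -> #[x] = 2 -> {in P, forall h, flips h false}.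
Proof.
move=> [Gc _ sPG cardP clsP] ox.
have autP h : h \in P -> is_aut h := fun Ph => autG (subsetP sPG h Ph).
have Px1 : x \in P^# by rewrite clsP class_refl.
have [b fx] := aut_flips (autP x (subsetP (subsetDl _ _) x Px1)).
have fP1 : {in P^#, forall h, flips h b}.
  have sCG : <[c]> \subset G by rewrite cycle_subG.
  move=> h; rewrite clsP => /imsetP[u /(subsetP sCG)/autG/aut_flips[b' fu] ->].
  exact: flipsJ fx fu.
have card3 : #|P^#| = 3 by move: (cardsD1 1 P); rewrite group1 cardP add1n => -[].
have /card_gt0P[h] : 0 < #|P^# :\ x|.
  by move: (cardsD1 x P^#); rewrite Px1 card3 add1n => -[<-].
rewrite in_setD1 => /andP[hx Ph1].
have xV : x^-1 = x by apply/eqP; rewrite eq_invg_mul -expg2 -order_dvdn ox.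
have xh1 : x * h \in P^#.
  move: Px1 Ph1; rewrite !inE => /andP[_ Px] /andP[_ Ph].
  by rewrite groupM // andbT -eq_invg_mul xV eq_sym hx.
move=> g Pg v; have b0 : b = false.
  by have := flips_eq v (fP1 _ xh1) (flipsM fx (fP1 _ Ph1)); rewrite addbb.
have [->|g1] := eqVneq g 1; first exact: flips1.
by rewrite -b0; apply: fP1; rewrite !inE g1.
Qed.

End KleinFrameSides.

Theorem lemma5 (R : realType) (n : nat) (G : {group {perm Knn n}})
  (pts : Knn n -> 'rV[R]_4) (arc : 'I_n -> 'I_n -> R -> 'rV[R]_4) :
  (forall g, g \in G -> is_aut g) ->
  (G \isog ('Alt_('I_4))%G)%g ->
  is_embedding pts arc ->
  induced_by_SO4 G pts arc ->
  forall g, g \in G -> #[g]%g = 2%N ->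
  fixW g = 0%N -> (4 %| fixV g)%N.
Proof.
move=> autG isoG _ _ g Gg og fixW0.
have [c [P frame]] := isog_Alt4_involution_frame isoG Gg og.
have [Gc c3 _ _ _] := frame.
have fP := klein_frame_flips autG frame og.
have nSc b : (c \in 'N(side n b | 'P))%g := flips_astabs b (flips_order3 (autG c Gc) c3).
have nSP b : (P \subset 'N(side n b | 'P))%g.
  by apply/subsetP => h /fP /flips_astabs.
have count b := klein_frame_fix_count frame (nSP b) (nSc b).
move: (count false) (count true).
rewrite -fixV_afix -fixW_afix fixW0 !card_side muln0 addn0 => dvd_n.
by rewrite (dvdn_addr _ dvd_n) Gauss_dvdr.
Qed.
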